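(* Let $n,d,r$ be positive integers with $r\le d\le n$. Let $F\in\mathbb{R}^{d\times n}$ have rank $d$, with compact SVD $F=U_F\Sigma_F V_F^\top$ ($V_F\in\mathbb{R}^{n\times d}$ with orthonormal columns), and suppose $\max_{i}\|e_i^\top V_F\|_2\le \mu\sqrt{d/n}$; let $\kappa=\sigma_{\max}(F)/\sigma_{\min}(F)$. Let $W^*\in\mathbb{R}^{d\times d}$ be symmetric of rank $r$ with $\|W^*\|_2\le c_W$, $L^*=F^\top W^*F$, and let $S^*\in\mathbb{R}^{n\times n}$ be symmetric with at most $z$ nonzero entries per row and per column, $z\le n/(20\mu^2d\kappa)$. Let $M=L^*+S^*$. Let $t\ge1$ be an integer, let $\zeta_t=\mu^2\sigma_{\max}^2(F)\frac{d}{n}\frac{c_W}{5^{t-1}}$, and let $L_{t-1}\in\mathbb{R}^{n\times n}$ satisfy $\|L^*-L_{t-1}\|_\infty\le\mu^2\sigma_{\max}^2(F)\frac{d}{n}\frac{c_W}{5^{t-1}}$. Define $S_t=\mathcal{P}_{\zeta_t}(M-L_{t-1})$. Then $\|S^*-S_t\|_\infty\le2\mu^2\sigma_{\max}^2(F)\frac{d}{n}\frac{c_W}{5^{t-1}}$ and $\operatorname{Supp}(S_t)\subseteq\operatorname{Supp}(S^* )$.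
   Context: $e_i$ is the $i$-th standard basis vector; $\sigma_{\max}(F),\sigma_{\min}(F)$ are the largest and smallest of the $d$ singular values of $F$. $\|A\|_\infty=\max_{i,j}|A_{ij}|$, $\|A\|_2$ is the spectral norm, $\operatorname{Supp}(A)$ is the set of indices of nonzero entries. For $a\ge0$, $\mathcal{P}_a(A)$ is entrywise hard thresholding: $(\mathcal{P}_a(A))_{ij}=A_{ij}$ if $|A_{ij}|>a$ and $0$ otherwise. *)

From HB Require Import structures.
From mathcomp Require Import all_boot all_order all_algebra.
From mathcomp Require Import classical_sets reals.
Set Implicit Arguments. Unset Strict Implicit. Unset Printing Implicit Defensive.
Import Order.TTheory GRing.Theory Num.Theory.
Local Open Scope ring_scope.

Section Defs.
Variable R : realType.

Definition rnorm2 (k : nat) (v : 'rV[R]_k) : R := Num.sqrt (\sum_j (v 0 j) ^+ 2).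
Definition cnorm2 (k : nat) (v : 'cV[R]_k) : R := Num.sqrt (\sum_i (v i 0) ^+ 2).

Definition spec_norm (m k : nat) (A : 'M[R]_(m, k)) : R :=
  sup [set y : R | exists x : 'cV[R]_k, cnorm2 x = 1 /\ y = cnorm2 (A *m x)].

Definition maxnorm (m k : nat) (A : 'M[R]_(m, k)) : R :=
  \big[Num.max/0]_(i < m) \big[Num.max/0]_(j < k) `|A i j|.

Definition hard_thresh (m k : nat) (a : R) (A : 'M[R]_(m, k)) : 'M[R]_(m, k) :=
  \matrix_(i, j) (if a < `|A i j| then A i j else 0).

Definition supp (m k : nat) (A : 'M[R]_(m, k)) : {set 'I_m * 'I_k} :=
  [set ij | A ij.1 ij.2 != 0].

Definition smax (d : nat) (s : 'rV[R]_d) : R := \big[Num.max/0]_(i < d) s 0 i.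
Definition smin (d : nat) (s : 'rV[R]_d) : R := \big[Num.min/smax s]_(i < d) s 0 i.

Definition compact_svd (d n : nat) (F : 'M[R]_(d, n)) (U : 'M[R]_d) (s : 'rV[R]_d)
    (V : 'M[R]_(n, d)) : Prop :=
  [/\ U^T *m U = 1%:M, V^T *m V = 1%:M, (forall i, 0 < s 0 i) &
      F = U *m diag_mx s *m V^T].

End Defs.

From HB Require Import structures.
From mathcomp Require Import all_boot all_order all_algebra.
From mathcomp Require Import classical_sets reals lra.
Set Implicit Arguments. Unset Strict Implicit. Unset Printing Implicit Defensive.
Import Order.TTheory GRing.Theory Num.Theory.
Local Open Scope ring_scope.

(* Each entry of M - L_{t-1} is S^*_ij plus an error of modulus at most zeta,
   so thresholding at zeta kills every entry outside the support of S^* and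
   moves every other entry by at most 2 zeta. *)

Section Thresh.
Variable R : realDomainType.

Definition thresh (a x : R) : R := if a < `|x| then x else 0.

Lemma thresh_perturb_dist (a x e : R) :
  `|e| <= a -> `|x - thresh a (x + e)| <= 2 * a.
Proof.
move=> ea; have a0 := le_trans (normr_ge0 e) ea.
rewrite /thresh; case: ifPn => [_ | ].
  by rewrite opprD addNKr normrN; lra.
rewrite -leNgt subr0 => xea.
have -> : x = (x + e) - e by rewrite addrK.
by apply: le_trans (ler_normB _ _) _; lra.
Qed.

Lemma thresh_perturb_neq0 (a x e : R) :
  `|e| <= a -> thresh a (x + e) != 0 -> x != 0.
Proof.
move=> ea; apply: contraNN => /eqP ->.
by rewrite /thresh add0r ltNge ea.
Qed.

End Thresh.

Section MaxNorm.
Variables (R : realType) (m k : nat).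
Implicit Types (A S E : 'M[R]_(m, k)) (a : R).

Lemma maxnorm_ge0 A : 0 <= maxnorm A.
Proof. exact: bigmax_ge_id. Qed.

Lemma normr_le_maxnorm A i j : `|A i j| <= maxnorm A.
Proof.
apply: le_trans (le_bigmax _ _ i).
exact: (le_bigmax _ (fun j => `|A i j|) j).
Qed.

Lemma maxnorm_le A a :
  0 <= a -> (forall i j, `|A i j| <= a) -> maxnorm A <= a.
Proof. by move=> a0 Aa; apply: bigmax_le => // i _; apply: bigmax_le. Qed.

Lemma hard_thresh_mxE a A i j : hard_thresh a A i j = thresh a (A i j).
Proof. by rewrite mxE. Qed.

Lemma maxnorm_hard_thresh_perturb S E a :
  maxnorm E <= a -> maxnorm (S - hard_thresh a (S + E)) <= 2 * a.
Proof.
move=> Ea; have a0 := le_trans (maxnorm_ge0 E) Ea.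
apply: maxnorm_le => [|i j]; first lra.
rewrite 2!mxE hard_thresh_mxE mxE; apply: thresh_perturb_dist.
exact: le_trans (normr_le_maxnorm E i j) Ea.
Qed.

Lemma supp_hard_thresh_perturb S E a :
  maxnorm E <= a -> supp (hard_thresh a (S + E)) \subset supp S.
Proof.
move=> Ea; apply/fintype.subsetP => -[i j]; rewrite !inE /= hard_thresh_mxE mxE.
exact/thresh_perturb_neq0/(le_trans (normr_le_maxnorm E i j) Ea).
Qed.

End MaxNorm.

Theorem lemma1 (R : realType) (n d r : nat)
  (Hr : (0 < r)%N) (Hrd : (r <= d)%N) (Hdn : (d <= n)%N)
  (F : 'M[R]_(d, n)) (HF : \rank F = d)
  (U : 'M[R]_d) (s : 'rV[R]_d) (V : 'M[R]_(n, d))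
  (Hsvd : compact_svd F U s V)
  (mu : R)
  (Hmu : forall i : 'I_n, rnorm2 (row i V) <= mu * Num.sqrt (d%:R / n%:R))
  (W : 'M[R]_d) (cW : R)
  (HWsym : W^T = W) (HWrank : \rank W = r) (HWnorm : spec_norm W <= cW)
  (S : 'M[R]_n) (z : nat)
  (HSsym : S^T = S)
  (HSrow : forall i, (#|[set j | S i j != 0%R]| <= z)%N)
  (HScol : forall j, (#|[set i | S i j != 0%R]| <= z)%N)
  (Hz : z%:R <= n%:R / (20 * mu ^+ 2 * d%:R * (smax s / smin s)))
  (t : nat) (Ht : (1 <= t)%N)
  (Lprev : 'M[R]_n) :
  let L := F^T *m W *m F in
  let M := L + S in
  let zeta := mu ^+ 2 * (smax s) ^+ 2 * (d%:R / n%:R) * (cW / 5 ^+ (t - 1)) in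
  maxnorm (L - Lprev) <= zeta ->
  let St := hard_thresh zeta (M - Lprev) in
  maxnorm (S - St) <= 2 * zeta /\ supp St \subset supp S.
Proof.
move=> L M zeta HE St.
have -> : St = hard_thresh zeta (S + (L - Lprev)) by rewrite /St /M addrAC addrC.
split; [exact: maxnorm_hard_thresh_perturb | exact: supp_hard_thresh_perturb].
Qed.
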